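(* Let $\psi:(0,+\infty)\to\mathbb R$ be a $C^1$ concave function with $\psi>0$ and $\psi'>0$, and assume $\psi(1)D_w$ lies in the image of $\psi$ (so that $\psi^{-1}(\psi(1)D_w)$ is defined; $\psi^{-1}$ is the inverse of the strictly increasing $\psi$). Suppose $f:V\to(0,\infty)$ and $(\Delta^\psi f)(x)<0$ at some vertex $x$. Then $$\Gamma^{\psi}(f)(x)\leq D_{\mu}\left[\psi'(1)\left(\psi^{-1}(\psi(1)D_{w})-1\right)+\psi(1)\right].$$
   Context: Graphs: $G=(V,E)$ is a connected, locally finite graph; each edge $xy$ carries a weight $w_{xy}>0$ (possibly asymmetric), and $\mu:V\to(0,\infty)$ is a vertex measure; $y\sim x$ means $xy\in E$, $\deg(x)=\sum_{y\sim x}w_{xy}<\infty$, $D_\mu=\sup_{x}\deg(x)/\mu(x)$, $D_w=\sup_{x\sim y}\deg(x)/w_{xy}$ (assumed finite). Laplacian: $\Delta f(x)=\frac{1}{\mu(x)}\sum_{y\sim x}w_{xy}(f(y)-f(x))$. For $\psi:(0,\infty)\to\mathbb R$ and $f:V\to(0,\infty)$: $\Delta^\psi f(x)=\Delta\big[\psi\big(\tfrac{f}{f(x)}\big)\big](x)$; for $C^1$ $\psi$, $\overline\psi(s)=\psi'(1)(s-1)-(\psi(s)-\psi(1))$ and $\Gamma^\psi f=\Delta^{\overline\psi}f$. *)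

From HB Require Import structures.
From mathcomp Require Import all_boot all_order all_algebra.
From mathcomp Require Import all_classical all_reals all_analysis.
From Stdlib Require Import Relations.
Set Implicit Arguments. Unset Strict Implicit. Unset Printing Implicit Defensive.
Import Order.TTheory GRing.Theory Num.Theory numFieldNormedType.Exports.
Local Open Scope classical_set_scope.
Local Open Scope ring_scope.

(* A locally finite graph on vertex type V is given by its neighbour lists
   N x (finite, duplicate free): y ~ x  iff  y \in N x.
   Edge weights w x y (possibly asymmetric), vertex measure mu. *)

Definition adjacent (V : eqType) (N : V -> seq V) (x y : V) : Prop := y \in N x.

Definition weighted_graph (R : realType) (V : eqType) (N : V -> seq V)
  (w : V -> V -> R) (mu : V -> R) : Prop :=
  [/\ (forall x, uniq (N x) /\ x \notin N x),
      (forall x y, (y \in N x) = (x \in N y)),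
      (forall x y, clos_refl_trans V (adjacent N) x y),
      (forall x y, y \in N x -> 0 < w x y)
    & (forall x, 0 < mu x)].

Definition deg (R : realType) (V : eqType) (N : V -> seq V)
  (w : V -> V -> R) (x : V) : R := \sum_(y <- N x) w x y.

Definition Dmu_set (R : realType) (V : eqType) (N : V -> seq V)
  (w : V -> V -> R) (mu : V -> R) : set R :=
  [set r | exists x, r = deg N w x / mu x].
Definition Dmu (R : realType) (V : eqType) (N : V -> seq V)
  (w : V -> V -> R) (mu : V -> R) : R := sup (Dmu_set N w mu).

Definition Dw_set (R : realType) (V : eqType) (N : V -> seq V)
  (w : V -> V -> R) : set R :=
  [set r | exists x y, y \in N x /\ r = deg N w x / w x y].
Definition Dw (R : realType) (V : eqType) (N : V -> seq V)
  (w : V -> V -> R) : R := sup (Dw_set N w).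

Definition lap (R : realType) (V : eqType) (N : V -> seq V)
  (w : V -> V -> R) (mu : V -> R) (f : V -> R) (x : V) : R :=
  (mu x)^-1 * \sum_(y <- N x) w x y * (f y - f x).

Definition lap_psi (R : realType) (V : eqType) (N : V -> seq V)
  (w : V -> V -> R) (mu : V -> R) (psi : R -> R) (f : V -> R) (x : V) : R :=
  lap N w mu (fun y => psi (f y / f x)) x.

Definition psibar (R : realType) (psi : R -> R) (s : R) : R :=
  (derive1 psi) 1 * (s - 1) - (psi s - psi 1).

Definition Gamma_psi (R : realType) (V : eqType) (N : V -> seq V)
  (w : V -> V -> R) (mu : V -> R) (psi : R -> R) (f : V -> R) (x : V) : R :=
  lap_psi N w mu (psibar psi) f x.

Definition good_psi (R : realType) (psi : R -> R) : Prop :=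
  [/\ (forall s, 0 < s -> derivable psi s 1),
      (forall s : R, 0 < s -> {for s, continuous (derive1 psi)}),
      (forall s t l, 0 < s -> 0 < t -> 0 <= l <= 1 ->
          l * psi s + (1 - l) * psi t <= psi (l * s + (1 - l) * t)),
      (forall s, 0 < s -> 0 < psi s)
    & (forall s, 0 < s -> 0 < (derive1 psi) s)].

From mathcomp Require Import all_boot all_order all_algebra.
From mathcomp Require Import all_classical all_reals all_analysis.
Set Implicit Arguments. Unset Strict Implicit. Unset Printing Implicit Defensive.
Import Order.TTheory GRing.Theory Num.Theory numFieldNormedType.Exports.
Local Open Scope classical_set_scope.
Local Open Scope ring_scope.

(* Write t_y = f(y)/f(x).  If Delta^psi f(x) < 0, the positive terms w_xy psi(t_y) of
   sum_y w_xy psi(t_y) < deg(x) psi(1) are each below deg(x) psi(1), so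
   psi(t_y) < psi(1) deg(x)/w_xy <= psi(1) D_w = psi(c) and t_y < c since psi is
   increasing.  As psi > 0, psibar(t_y) <= psi'(1)(c - 1) + psi(1) for every
   neighbour y, and summing against the weights gives
   Gamma^psi f(x) <= deg(x)/mu(x) (psi'(1)(c - 1) + psi(1)) <= D_mu (...). *)

Lemma ler_term_sum (R : numDomainType) (I : eqType) (r : seq I) (F : I -> R) i :
  {in r, forall j, 0 <= F j} -> i \in r -> F i <= \sum_(j <- r) F j.
Proof.
move=> F_ge0 ri; rewrite (big_rem i ri) /= lerDl big_seq.
by apply: sumr_ge0 => j /mem_rem; apply: F_ge0.
Qed.

Lemma gtr0_derive1_mono_pos (R : realType) (psi : R -> R) :
  (forall s, 0 < s -> derivable psi s 1) ->
  (forall s, 0 < s -> 0 < derive1 psi s) ->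
  {in `]0, +oo[ &, {mono psi : s t / s < t}}.
Proof.
move=> dpsi dpsi_gt0; apply/leW_mono_in/le_mono_in => s t.
rewrite !in_itv /= !andbT => s_gt0 t_gt0 st.
have in_oo u : 0 < u -> u <= t -> u \in `]0, t + 1[.
  by move=> u_gt0 ut; rewrite in_itv /= u_gt0 (le_lt_trans ut) // ltrDl.
apply: (@gtr0_derive1_lt_oo R psi 0 (t + 1)) => //.
- by move=> u; rewrite in_itv /= => /andP [u_gt0 _]; apply: dpsi.
- by move=> u; rewrite in_itv /= => /andP [u_gt0 _]; apply: dpsi_gt0.
- move=> u; rewrite inE /= in_itv /= => /andP [u_gt0 _].
  by apply/differentiable_continuous/derivable1_diffP/dpsi.
- exact/in_oo/ltW.
- exact: in_oo.
Qed.

Lemma psibar1 (R : realType) (psi : R -> R) : psibar psi 1 = 0.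
Proof. by rewrite /psibar !subrr mulr0 subr0. Qed.

Lemma psibar_le (R : realType) (psi : R -> R) t c :
  0 <= derive1 psi 1 -> t <= c -> 0 <= psi t ->
  psibar psi t <= derive1 psi 1 * (c - 1) + psi 1.
Proof.
move=> dpsi1_ge0 tc psit_ge0; rewrite /psibar opprB.
apply: lerD; first by rewrite ler_wpM2l // lerB.
by rewrite lerBlDr lerDl.
Qed.

Section WeightedLaplacian.
Variables (R : realType) (V : eqType) (N : V -> seq V) (w : V -> V -> R) (mu : V -> R).
Hypothesis w_gt0 : forall x y, y \in N x -> 0 < w x y.
Hypothesis mu_gt0 : forall x, 0 < mu x.

Lemma weight_le_deg x y : y \in N x -> w x y <= deg N w x.
Proof. by apply: ler_term_sum => z /w_gt0/ltW. Qed.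

Lemma deg_div_le_Dw x y :
  has_ubound (Dw_set N w) -> y \in N x -> deg N w x / w x y <= Dw N w.
Proof. by move=> hDw yx; apply: ub_le_sup => //; exists x, y. Qed.

Lemma deg_div_le_Dmu x :
  has_ubound (Dmu_set N w mu) -> deg N w x / mu x <= Dmu N w mu.
Proof. by move=> hDmu; apply: ub_le_sup => //; exists x. Qed.

Lemma Dw_ge1 x y : has_ubound (Dw_set N w) -> y \in N x -> 1 <= Dw N w.
Proof.
move=> hDw yx; apply: le_trans (deg_div_le_Dw hDw yx).
by rewrite ler_pdivlMr ?w_gt0 // mul1r weight_le_deg.
Qed.

Lemma lapE (g : V -> R) x :
  lap N w mu g x = (mu x)^-1 * (\sum_(y <- N x) w x y * g y - deg N w x * g x).
Proof.
by rewrite /lap /deg big_distrl -sumrB; congr (_ * _); apply: eq_bigr => y _; rewrite mulrBr.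
Qed.

Lemma lap_lt0_sum (g : V -> R) x :
  lap N w mu g x < 0 -> \sum_(y <- N x) w x y * g y < deg N w x * g x.
Proof. by rewrite lapE pmulr_rlt0 ?invr_gt0 // subr_lt0. Qed.

Lemma lap_lt0_neighbour (g : V -> R) x : lap N w mu g x < 0 -> exists y, y \in N x.
Proof.
move=> /lap_lt0_sum; rewrite /deg; case: (N x) => [|y s _].
  by rewrite !big_nil mul0r ltxx.
by exists y; rewrite inE eqxx.
Qed.

Lemma lap_lt0_neighbour_lt (g : V -> R) x y :
  (forall z, 0 <= g z) -> has_ubound (Dw_set N w) ->
  lap N w mu g x < 0 -> y \in N x -> g y < Dw N w * g x.
Proof.
move=> g_ge0 hDw /lap_lt0_sum sum_lt yx.
have term_lt : w x y * g y < deg N w x * g x.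
  apply: le_lt_trans sum_lt; apply: (ler_term_sum (F := fun z => w x z * g z)) => //.
  by move=> z zx; rewrite mulr_ge0 // ltW // w_gt0.
apply: (lt_le_trans (y := deg N w x / w x y * g x)).
  by rewrite mulrAC ltr_pdivlMr ?w_gt0 // mulrC.
by rewrite ler_wpM2r // deg_div_le_Dw.
Qed.

Lemma lap_le_deg (g : V -> R) x B :
  (forall y, y \in N x -> g y - g x <= B) -> lap N w mu g x <= deg N w x / mu x * B.
Proof.
move=> gB; rewrite /lap /deg mulrC mulrAC ler_pM2r ?invr_gt0 //.
rewrite big_distrl /= !big_seq; apply: ler_sum => y yx.
by rewrite ler_pM2l ?w_gt0 ?gB.
Qed.

End WeightedLaplacian.

Theorem mainTheorem5 (R : realType) (V : eqType) (N : V -> seq V)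
  (w : V -> V -> R) (mu : V -> R) (psi : R -> R) (f : V -> R) (x : V) (c : R) :
  weighted_graph N w mu ->
  has_ubound (Dmu_set N w mu) ->
  has_ubound (Dw_set N w) ->
  good_psi psi ->
  (* c = psi^{-1}(psi(1) D_w) *)
  0 < c -> psi c = psi 1 * Dw N w ->
  (forall y, 0 < f y) ->
  lap_psi N w mu psi f x < 0 ->
  Gamma_psi N w mu psi f x <=
    Dmu N w mu * ((derive1 psi) 1 * (c - 1) + psi 1).
Proof.
move=> [_ _ _ w_gt0 mu_gt0] hDmu hDw [dpsi _ _ psi_gt0 dpsi_gt0] c_gt0 psi_c f_gt0 lap_lt0.
set t := fun y => f y / f x.
have t_gt0 y : 0 < t y by rewrite divr_gt0.
have tx : t x = 1 by rewrite /t divff // gt_eqF.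
have psi_mono := gtr0_derive1_mono_pos dpsi dpsi_gt0.
have pos (s : R) : 0 < s -> s \in `]0, +oo[ by rewrite in_itv /= andbT.
have psit_ge0 y : 0 <= psi (t y) by rewrite ltW ?psi_gt0.
have t_lt_c y : y \in N x -> t y < c.
  move=> yx; rewrite -(psi_mono _ _ (pos _ (t_gt0 y)) (pos _ c_gt0)) psi_c mulrC.
  have := lap_lt0_neighbour_lt (g := psi \o t) w_gt0 mu_gt0 psit_ge0 hDw lap_lt0 yx.
  by rewrite /= tx.
have [y0 y0x] := lap_lt0_neighbour mu_gt0 lap_lt0.
have c_ge1 : 1 <= c.
  rewrite leNgt -(psi_mono _ _ (pos _ c_gt0)) ?pos // -leNgt psi_c ler_pMr ?psi_gt0 //.
  exact: (Dw_ge1 w_gt0 hDw y0x).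
have B_ge0 : 0 <= derive1 psi 1 * (c - 1) + psi 1.
  by rewrite addr_ge0 ?mulr_ge0 ?subr_ge0 // ltW ?psi_gt0 ?dpsi_gt0.
apply: le_trans (ler_wpM2r B_ge0 (deg_div_le_Dmu x hDmu)).
apply: (lap_le_deg w_gt0 mu_gt0) => y yx /=.
rewrite -/(t y) -/(t x) tx psibar1 subr0.
apply: psibar_le (psit_ge0 y); first by rewrite ltW // dpsi_gt0.
exact/ltW/t_lt_c.
Qed.
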